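(* Let $C\le A$ be groups and $2\le n\le\infty$. If $a\in A\setminus C$ is $n$-RF (respectively $n$-RTF) rel $C$, then so is every element $\tilde a\in CaC$.
   Context: For a group $G$, subgroup $D$, and $2\le n\le\infty$: $a\in G\setminus D$ is $n$-RF rel $D$ if $a^{e_1}d_1\cdots a^{e_k}d_k\ne\mathrm{id}$ for all $k\ge1$, $e_i\in\{\pm1\}$, $d_i\in D$ such that $d_i\ne\mathrm{id}$ whenever $e_i=-e_{i+1}$ (indices mod $k$), and fewer than $n$ of the $e_i$ are $+1$ and fewer than $n$ are $-1$. $a\in G\setminus D$ is $n$-RTF rel $D$ if $ad_1ad_2\cdots ad_k\ne\mathrm{id}$ for all $d_i\in D$ and $1\le k<n$. *)

From Stdlib Require Import List Arith PeanoNat.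
Import ListNotations.

Record group_laws {G : Type} (mul : G -> G -> G) (e : G) (inv : G -> G) : Prop := {
  mulA : forall x y z, mul x (mul y z) = mul (mul x y) z;
  mul1g : forall x, mul e x = x;
  mulg1 : forall x, mul x e = x;
  mulVg : forall x, mul (inv x) x = e;
  mulgV : forall x, mul x (inv x) = e
}.

Record subgroup {G : Type} (mul : G -> G -> G) (e : G) (inv : G -> G) (D : G -> Prop) : Prop := {
  sub1 : D e;
  subM : forall x y, D x -> D y -> D (mul x y);
  subV : forall x, D x -> D (inv x)
}.

(* Extended naturals 2..infinity: None = infinity. *)
Definition natinf := option nat.
Definition lt_inf (m : nat) (n : natinf) : Prop :=
  match n with None => True | Some k => m < k end.
Definition le_inf (m : nat) (n : natinf) : Prop :=
  match n with None => True | Some k => m <= k end.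

Section Words.
Context {G : Type} (mul : G -> G -> G) (e : G) (inv : G -> G).

Definition apow (a : G) (b : bool) : G := if b then a else inv a.

(* a^{e_1} d_1 a^{e_2} d_2 ... a^{e_k} d_k, with s = [(e_1,d_1); ...; (e_k,d_k)] *)
Definition word_prod (a : G) (s : list (bool * G)) : G :=
  fold_right (fun p acc => mul (mul (apow a (fst p)) (snd p)) acc) e s.

Definition cyc_reduced (s : list (bool * G)) : Prop :=
  forall i, i < length s ->
    fst (nth i s (true, e)) = negb (fst (nth ((i + 1) mod length s) s (true, e))) ->
    snd (nth i s (true, e)) <> e.

Definition count_plus (s : list (bool * G)) : nat := length (filter (fun p => fst p) s).
Definition count_minus (s : list (bool * G)) : nat := length (filter (fun p => negb (fst p)) s).

Definition tword_prod (a : G) (ds : list G) : G :=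
  fold_right (fun d acc => mul (mul a d) acc) e ds.

Definition n_RF (D : G -> Prop) (n : natinf) (a : G) : Prop :=
  ~ D a /\
  forall s : list (bool * G),
    s <> [] ->
    Forall (fun p => D (snd p)) s ->
    cyc_reduced s ->
    lt_inf (count_plus s) n -> lt_inf (count_minus s) n ->
    word_prod a s <> e.

Definition n_RTF (D : G -> Prop) (n : natinf) (a : G) : Prop :=
  ~ D a /\
  forall ds : list G,
    Forall D ds -> 1 <= length ds -> lt_inf (length ds) n ->
    tword_prod a ds <> e.

End Words.

(** Write [b = c1 a c2] with [c1, c2 ∈ C] as [b^ε = X_ε a^ε X_{-ε}^{-1}], where
    [X_+ = c1] and [X_- = c2^{-1}].  Conjugating a relator
    [b^{e_1} d_1 ⋯ b^{e_k} d_k] by [X_{e_1}] turns it into the relator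
    [a^{e_1} d'_1 ⋯ a^{e_k} d'_k] with [d'_i = X_{-e_i}^{-1} d_i X_{e_{i+1}} ∈ C]
    (indices mod [k]).  The exponents are unchanged, and when [e_{i+1} = -e_i]
    the letter [d'_i] is a conjugate of [d_i], so it is trivial only if [d_i] is:
    the new word is again admissible.  For positive words,
    [b d_1 ⋯ b d_k] is conjugate by [c1] to [a (c2 d_1 c1) ⋯ a (c2 d_k c1)]. *)

From Stdlib Require Import List Arith Lia.
Import ListNotations.

Lemma length_filter_fst {T : Type} (f : bool -> bool) (s t : list (bool * T)) :
  map fst s = map fst t ->
  length (filter (fun p => f (fst p)) s) = length (filter (fun p => f (fst p)) t).
Proof.
  revert t; induction s as [|[eps d] s IH]; intros [|[eps' d'] t] Hst;
    try discriminate; [reflexivity|].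
  injection Hst as -> Hst; simpl.
  destruct (f eps'); simpl; rewrite (IH t Hst); reflexivity.
Qed.

Lemma nth_succ_cyclic {T : Type} (p0 d : T) (s : list T) i :
  i < length (p0 :: s) ->
  nth (S i) (p0 :: s) p0 = nth (S i mod length (p0 :: s)) (p0 :: s) d.
Proof.
  intros Hi.
  destruct (Nat.lt_ge_cases (S i) (length (p0 :: s))) as [Hlt | Hge].
  - rewrite Nat.mod_small by exact Hlt. apply nth_indep, Hlt.
  - assert (Hlen : S i = length (p0 :: s)) by lia.
    rewrite Hlen, Nat.Div0.mod_same, nth_overflow by lia. reflexivity.
Qed.

Section DoubleCoset.
Variables (A : Type) (mul : A -> A -> A) (e : A) (inv : A -> A).
Hypothesis HA : group_laws mul e inv.
Variable C : A -> Prop.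
Hypothesis HC : subgroup mul e inv C.
Local Infix "*" := mul.

Lemma mul_assoc x y z : x * (y * z) = x * y * z. Proof. exact (mulA _ _ _ HA x y z). Qed.
Lemma mul_1_l x : e * x = x. Proof. exact (mul1g _ _ _ HA x). Qed.
Lemma mul_1_r x : x * e = x. Proof. exact (mulg1 _ _ _ HA x). Qed.
Lemma mul_inv_l x : inv x * x = e. Proof. exact (mulVg _ _ _ HA x). Qed.
Lemma mul_inv_r x : x * inv x = e. Proof. exact (mulgV _ _ _ HA x). Qed.

Lemma mul_cancel_l x y z : x * y = x * z -> y = z.
Proof.
  intros H.
  rewrite <- (mul_1_l y), <- (mul_1_l z), <- (mul_inv_l x), <- !mul_assoc, H.
  reflexivity.
Qed.

Lemma inv_unique x y : x * y = e -> y = inv x.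
Proof. intros H. apply (mul_cancel_l x). rewrite H, mul_inv_r. reflexivity. Qed.

Lemma inv_involutive x : inv (inv x) = x.
Proof. symmetry. apply inv_unique, mul_inv_l. Qed.

Lemma inv_mul x y : inv (x * y) = inv y * inv x.
Proof.
  symmetry. apply inv_unique.
  rewrite mul_assoc, <- (mul_assoc x y), mul_inv_r, mul_1_r, mul_inv_r.
  reflexivity.
Qed.

Lemma conj_eq_1 x d : inv x * d * x = e -> d = e.
Proof.
  intros H. transitivity (x * (inv x * d * x) * inv x).
  - rewrite !mul_assoc, mul_inv_r, mul_1_l, <- mul_assoc, mul_inv_r, mul_1_r.
    reflexivity.
  - rewrite H, mul_1_r, mul_inv_r. reflexivity.
Qed.

Lemma subgroup_mul3 x d y : C x -> C d -> C y -> C (x * d * y).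
Proof. intros Cx Cd Cy. apply (subM _ _ _ _ HC); [apply (subM _ _ _ _ HC)|]; assumption. Qed.

Lemma subgroup_inv x : C x -> C (inv x).
Proof. exact (subV _ _ _ _ HC x). Qed.

Lemma double_coset_notin c1 c2 a : C c1 -> C c2 -> ~ C a -> ~ C (c1 * a * c2).
Proof.
  intros h1 h2 Ha Hb. apply Ha.
  replace a with (inv c1 * (c1 * a * c2) * inv c2).
  - auto using subgroup_mul3, subgroup_inv.
  - rewrite <- !mul_assoc, mul_inv_r, mul_1_r, !mul_assoc, mul_inv_l, mul_1_l.
    reflexivity.
Qed.

Section Twist.
Variable X : bool -> A.

Definition lead_factor (s : list (bool * A)) (z : A) : A :=
  match s with [] => z | (eps, _) :: _ => X eps end.

(* [z] closes the cycle: it is the factor attached to the last letter. *)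
Fixpoint twist (s : list (bool * A)) (z : A) : list (bool * A) :=
  match s with
  | [] => []
  | (eps, d) :: s' => (eps, inv (X (negb eps)) * d * lead_factor s' z) :: twist s' z
  end.

Lemma word_prod_twist a b s z :
  (forall eps, apow inv b eps = X eps * apow inv a eps * inv (X (negb eps))) ->
  word_prod mul e inv b s * z = lead_factor s z * word_prod mul e inv a (twist s z).
Proof.
  intros Hb. induction s as [|[eps d] s IH]; simpl.
  - rewrite mul_1_l, mul_1_r. reflexivity.
  - rewrite <- mul_assoc, IH, Hb, !mul_assoc. reflexivity.
Qed.

Lemma map_fst_twist s z : map fst (twist s z) = map fst s.
Proof. induction s as [|[eps d] s IH]; simpl; congruence. Qed.

Lemma length_twist s z : length (twist s z) = length s.
Proof. rewrite <- (length_map fst), map_fst_twist, length_map. reflexivity. Qed.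

Lemma fst_nth_twist s z i p :
  fst (nth i (twist s z) p) = fst (nth i s p).
Proof. rewrite <- !(map_nth fst), map_fst_twist. reflexivity. Qed.

Lemma snd_nth_twist s z i p : i < length s ->
  snd (nth i (twist s z) p) =
  inv (X (negb (fst (nth i s p)))) * snd (nth i s p) *
  nth (S i) (map (fun q => X (fst q)) s) z.
Proof.
  revert i; induction s as [|[eps d] s IH]; intros [|i] Hi; simpl in Hi |- *;
    try lia.
  - destruct s as [|[eps' d'] s]; reflexivity.
  - apply IH. lia.
Qed.

Lemma cyc_reduced_twist eps0 d0 s :
  cyc_reduced e ((eps0, d0) :: s) ->
  cyc_reduced e (twist ((eps0, d0) :: s) (X eps0)).
Proof.
  intros Hred i Hi Hsign.
  rewrite length_twist in Hi, Hsign. rewrite !fst_nth_twist in Hsign.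
  rewrite snd_nth_twist by exact Hi.
  change (X eps0) with ((fun q : bool * A => X (fst q)) (eps0, d0)).
  rewrite map_nth, nth_succ_cyclic with (d := (true, e)) by exact Hi.
  rewrite <- Nat.add_1_r, Hsign, Bool.negb_involutive.
  intros Hd. apply (Hred i Hi Hsign), (conj_eq_1 _ _ Hd).
Qed.

Lemma Forall_twist s z :
  (forall eps, C (X eps)) -> C z ->
  Forall (fun p => C (snd p)) s -> Forall (fun p => C (snd p)) (twist s z).
Proof.
  intros CX Cz. induction 1 as [|[eps d] s Cd Cs IH]; simpl; constructor; [|exact IH].
  apply subgroup_mul3; auto using subgroup_inv.
  destruct s as [|[eps' d'] s]; simpl; auto.
Qed.

End Twist.

Lemma n_RF_double_coset n a c1 c2 :
  C c1 -> C c2 -> n_RF mul e inv C n a -> n_RF mul e inv C n (c1 * a * c2).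
Proof.
  intros h1 h2 [Ha Hwords]. split; [now apply double_coset_notin|].
  set (X (eps : bool) := if eps then c1 else inv c2).
  assert (HX : forall eps,
             apow inv (c1 * a * c2) eps = X eps * apow inv a eps * inv (X (negb eps))).
  { intros []; simpl.
    - rewrite inv_involutive. reflexivity.
    - rewrite !inv_mul, mul_assoc. reflexivity. }
  assert (CX : forall eps, C (X eps)) by (intros []; unfold X; auto using subgroup_inv).
  intros [|[eps0 d0] s] Hne Cs Hred Hplus Hminus Hword; [now elim Hne|].
  pose proof (map_fst_twist X ((eps0, d0) :: s) (X eps0)) as Hfst.
  unfold count_plus, count_minus in *.
  apply (Hwords (twist X ((eps0, d0) :: s) (X eps0))).
  - discriminate.
  - now apply Forall_twist.
  - now apply cyc_reduced_twist.
  - now rewrite (length_filter_fst (fun b => b) _ _ Hfst).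
  - now rewrite (length_filter_fst negb _ _ Hfst).
  - pose proof (word_prod_twist X _ _ ((eps0, d0) :: s) (X eps0) HX) as Htwist.
    cbn [lead_factor] in Htwist. rewrite Hword, mul_1_l in Htwist.
    apply (mul_cancel_l (X eps0)). rewrite mul_1_r. symmetry. exact Htwist.
Qed.

Lemma tword_prod_double_coset c1 c2 a ds :
  tword_prod mul e (c1 * a * c2) ds * c1 =
  c1 * tword_prod mul e a (map (fun d => c2 * d * c1) ds).
Proof.
  induction ds as [|d ds IH]; simpl.
  - rewrite mul_1_l, mul_1_r. reflexivity.
  - rewrite <- mul_assoc, IH, !mul_assoc. reflexivity.
Qed.

Lemma n_RTF_double_coset n a c1 c2 :
  C c1 -> C c2 -> n_RTF mul e C n a -> n_RTF mul e C n (c1 * a * c2).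
Proof.
  intros h1 h2 [Ha Hwords]. split; [now apply double_coset_notin|].
  intros ds Cds Hlen1 Hlen Hword.
  apply (Hwords (map (fun d => c2 * d * c1) ds)); rewrite ?length_map; auto.
  - apply Forall_map. eapply Forall_impl; [|exact Cds].
    intros d Cd. auto using subgroup_mul3.
  - apply (mul_cancel_l c1).
    rewrite <- tword_prod_double_coset, Hword, mul_1_l, mul_1_r. reflexivity.
Qed.

End DoubleCoset.

Theorem lemma5p23 (A : Type) (mul : A -> A -> A) (e : A) (inv : A -> A)
  (HA : group_laws mul e inv) (C : A -> Prop) (HC : subgroup mul e inv C)
  (n : natinf) (Hn : le_inf 2 n) (a : A) :
  (n_RF mul e inv C n a ->
     forall c1 c2, C c1 -> C c2 -> n_RF mul e inv C n (mul (mul c1 a) c2)) /\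
  (n_RTF mul e C n a ->
     forall c1 c2, C c1 -> C c2 -> n_RTF mul e C n (mul (mul c1 a) c2)).
Proof.
  (* The bound [2 <= n] is only part of the paper's setting; the proof works for every [n]. *)
  split; intros Ha c1 c2 h1 h2.
  - exact (n_RF_double_coset A mul e inv HA C HC n a c1 c2 h1 h2 Ha).
  - exact (n_RTF_double_coset A mul e inv HA C HC n a c1 c2 h1 h2 Ha).
Qed.
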